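(* Let $\alpha>1$, $r>0$, and let $f:(0,r)\to(0,\infty)$ be a monotonically nondecreasing function such that $f(x)\simeq x^\alpha$ as $x\to0$ and $f(x)<x$ for all $x\in(0,r)$. For $x_1\in(0,r)$ define the sequence $(x_n)_{n\ge1}$ by $x_{n+1}=x_n-f(x_n)$, and let $S(x_1)=\{x_n:n\ge1\}\subset\mathbb{R}$. Then $x_n\simeq n^{-1/(\alpha-1)}$ as $n\to\infty$, $\dim_B S(x_1)=1-\frac1\alpha$, and $S(x_1)$ is Minkowski nondegenerate.
   Context: For sequences of positive reals, $a_n\simeq b_n$ as $n\to\infty$ means there exist constants $0<A\le B$ with $A\le a_n/b_n\le B$ for all $n$. For positive functions, $f(x)\simeq g(x)$ as $x\to0$ means there exist constants $0<A\le B$ with $f(x)/g(x)\in[A,B]$ for all sufficiently small $x>0$. For a bounded set $S\subset\mathbb{R}$ and $\varepsilon>0$, $S_\varepsilon=\{y\in\mathbb{R}: \mathrm{dist}(y,S)<\varepsilon\}$ and $|S_\varepsilon|$ denotes its Lebesgue measure. For $s\ge0$, the upper and lower $s$-dimensional Minkowski contents are $\mathcal M^{*s}(S)=\limsup_{\varepsilon\to0}|S_\varepsilon|/\varepsilon^{1-s}$ and $\mathcal M_*^{s}(S)=\liminf_{\varepsilon\to0}|S_\varepsilon|/\varepsilon^{1-s}$. The upper box dimension is $\overline{\dim}_BS=\inf\{s\ge0:\mathcal M^{*s}(S)=0\}$, the lower box dimension $\underline{\dim}_BS=\inf\{s\ge0:\mathcal M_*^{s}(S)=0\}$; if they coincide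 the common value is $\dim_BS$. $S$ is Minkowski nondegenerate if there is $d\ge0$ with $0<\mathcal M_*^d(S)\le\mathcal M^{*d}(S)<\infty$. A sequence is identified with the set of its terms. *)

From Stdlib Require Import Reals Lra Lia ClassicalEpsilon.
Open Scope R_scope.

Definition is_glb (E : R -> Prop) (m : R) : Prop :=
  (forall x, E x -> m <= x) /\ (forall b, (forall x, E x -> b <= x) -> b <= m).

(* Sums of lengths of countable covers of A by open intervals (a_n, b_n)
   (only covers with finite total length are recorded). *)
Definition cover_sums (A : R -> Prop) (m : R) : Prop :=
  exists a b : nat -> R,
    (forall n, a n <= b n) /\
    (forall x, A x -> exists n, a n < x < b n) /\
    infinite_sum (fun n => b n - a n) m.

(* Lebesgue (outer) measure of A: the infimum of the cover sums.
   For bounded A (the only case used) this infimum exists and is the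
   Lebesgue measure when A is measurable (e.g. open). *)
Definition leb_measure (A : R -> Prop) : R :=
  epsilon (inhabits 0) (fun m => is_glb (cover_sums A) m).

Definition nbhd (S : R -> Prop) (eps : R) : R -> Prop :=
  fun y => exists z, S z /\ Rabs (y - z) < eps.

Definition mink_ratio (S : R -> Prop) (s eps : R) : R :=
  leb_measure (nbhd S eps) / Rpower eps (1 - s).

(* Upper Minkowski content is zero: limsup_{eps->0+} ratio = 0
   (the ratio is nonnegative, so this means ratio -> 0). *)
Definition upper_content_zero (S : R -> Prop) (s : R) : Prop :=
  forall eta, 0 < eta -> exists delta, 0 < delta /\
    forall eps, 0 < eps < delta -> mink_ratio S s eps < eta.

Definition lower_content_zero (S : R -> Prop) (s : R) : Prop :=
  forall eta delta, 0 < eta -> 0 < delta ->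
    exists eps, 0 < eps < delta /\ mink_ratio S s eps < eta.

Definition lower_content_pos (S : R -> Prop) (s : R) : Prop :=
  exists c delta, 0 < c /\ 0 < delta /\
    forall eps, 0 < eps < delta -> c <= mink_ratio S s eps.

Definition upper_content_finite (S : R -> Prop) (s : R) : Prop :=
  exists C delta, 0 < delta /\
    forall eps, 0 < eps < delta -> mink_ratio S s eps <= C.

Definition upper_box_dim_eq (S : R -> Prop) (d : R) : Prop :=
  is_glb (fun s => 0 <= s /\ upper_content_zero S s) d.
Definition lower_box_dim_eq (S : R -> Prop) (d : R) : Prop :=
  is_glb (fun s => 0 <= s /\ lower_content_zero S s) d.
Definition box_dim_eq (S : R -> Prop) (d : R) : Prop :=
  upper_box_dim_eq S d /\ lower_box_dim_eq S d.

(* Minkowski nondegenerate (0 < M_*^d <= M^{*d} < oo; the middle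
   inequality holds automatically since liminf <= limsup). *)
Definition minkowski_nondegenerate (S : R -> Prop) : Prop :=
  exists d, 0 <= d /\ lower_content_pos S d /\ upper_content_finite S d.

(* The orbit: orbit f x1 k = x_{k+1}, i.e. x_n = orbit f x1 (n-1). *)
Fixpoint orbit (f : R -> R) (x1 : R) (k : nat) : R :=
  match k with
  | O => x1
  | S k => orbit f x1 k - f (orbit f x1 k)
  end.

Definition orbit_set (f : R -> R) (x1 : R) : R -> Prop :=
  fun y => exists k, y = orbit f x1 k.

(** Put [y k = x k ^ (1 - alpha)].  For small [z], writing
    [t = f z / z ~ z ^ (alpha - 1)], Bernoulli-type bounds on
    [(1 - t) ^ (1 - alpha)] show that one step of the map raises [z ^ (1 - alpha)]
    by an amount between two positive constants.  Hence [y k] grows linearly,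
    i.e. [x n ~ n ^ (-1 / (alpha - 1))].  For the [e]-neighbourhood [S_e] of
    the orbit, let [N] be the first index where the steps [f (x k)] drop
    below [2 e].  Then [S_e] contains [[0, x N]] and is covered by [N + 1]
    intervals of total length [x N + 2 e (N + 1)]; the power law and the
    linear growth show that [x N] and [e N] are both comparable to
    [e ^ (1 / alpha)].  Finally, any set with [|S_e| ~ e ^ (1 - d)] has box
    dimension [d] and is Minkowski nondegenerate. *)

From Stdlib Require Import Reals Lra Lia Classical ClassicalEpsilon List RList Rtopology.
Open Scope R_scope.

Lemma bounds_of_ratio (a b v p : R) : 0 < p -> a <= v / p <= b -> a * p <= v <= b * p.
Proof.
  intros Hp [Ha Hb]. replace v with (v / p * p) by (field; lra).
  split; apply Rmult_le_compat_r; lra.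
Qed.

Lemma Rpower_pos (x e : R) : 0 < Rpower x e.
Proof. apply exp_pos. Qed.

Lemma Rpower_inv_pair (x e : R) : 0 < x -> Rpower x (- e) * Rpower x e = 1.
Proof.
  intros Hx. rewrite <- Rpower_plus. replace (- e + e) with 0 by ring. now apply Rpower_O.
Qed.

Lemma Rpower_le_one (x c : R) : 0 <= c -> 0 < x <= 1 -> Rpower x c <= 1.
Proof.
  intros Hc Hx.
  assert (Hone : Rpower 1 c = 1) by (unfold Rpower; now rewrite ln_1, Rmult_0_r, exp_0).
  rewrite <- Hone. now apply Rle_Rpower_l.
Qed.

Lemma Rpower_ge_one (x c : R) : c <= 0 -> 0 < x <= 1 -> 1 <= Rpower x c.
Proof.
  intros Hc Hx. pose proof (Rpower_inv_pair x c ltac:(lra)) as Hinv.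
  pose proof (Rpower_le_one x (- c) ltac:(lra) Hx). pose proof (Rpower_pos x (- c)).
  pose proof (Rpower_pos x c). nra.
Qed.

Lemma Rpower_antitone (a b c : R) : 0 <= c -> 0 < a <= b -> Rpower b (- c) <= Rpower a (- c).
Proof.
  intros Hc Hab. rewrite !Rpower_Ropp. apply Rinv_le_contravar; [apply Rpower_pos|].
  now apply Rle_Rpower_l.
Qed.

Lemma Rpower_root_le (z w a : R) : 0 < a -> 0 < z -> 0 < w ->
  Rpower z a <= w -> z <= Rpower w (1 / a).
Proof.
  intros Ha Hz Hw H.
  replace z with (Rpower (Rpower z a) (1 / a)) at 1
    by (rewrite Rpower_mult; replace (a * (1 / a)) with 1 by (field; lra); now apply Rpower_1).
  apply Rle_Rpower_l; [apply Rlt_le, Rdiv_lt_0_compat; lra | split; [apply Rpower_pos | exact H]].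
Qed.

Lemma Rpower_root_ge (z w a : R) : 0 < a -> 0 < z -> 0 < w ->
  w <= Rpower z a -> Rpower w (1 / a) <= z.
Proof.
  intros Ha Hz Hw H.
  replace z with (Rpower (Rpower z a) (1 / a)) at 1
    by (rewrite Rpower_mult; replace (a * (1 / a)) with 1 by (field; lra); now apply Rpower_1).
  apply Rle_Rpower_l; [apply Rlt_le, Rdiv_lt_0_compat; lra | split; [exact Hw | exact H]].
Qed.

Lemma Rpower_small (b eta z : R) : 0 < b -> 0 < eta ->
  0 < z < Rpower eta (1 / b) -> Rpower z b < eta.
Proof.
  intros Hb Heta Hz.
  apply Rlt_le_trans with (Rpower (Rpower eta (1 / b)) b); [now apply Rlt_Rpower_l|].
  rewrite Rpower_mult. replace (1 / b * b) with 1 by (field; lra). rewrite Rpower_1; lra.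
Qed.

(** Elementary logarithm bounds, from [exp u >= 1 + u]. *)
Lemma ln_le_sub_one (y : R) : 0 < y -> ln y <= y - 1.
Proof. intros Hy. pose proof (exp_ineq1_le (ln y)). rewrite exp_ln in *; lra. Qed.

Lemma ln_ge_one_sub_inv (y : R) : 0 < y -> 1 - / y <= ln y.
Proof.
  intros Hy. pose proof (ln_le_sub_one (/ y) (Rinv_0_lt_compat _ Hy)).
  rewrite ln_Rinv in *; lra.
Qed.

Lemma bernoulli_lower (b t : R) : 0 < b -> 0 < t < 1 -> 1 + b * t <= Rpower (1 - t) (- b).
Proof.
  intros Hb Ht. unfold Rpower.
  pose proof (ln_le_sub_one (1 - t) ltac:(lra)).
  pose proof (exp_ineq1_le (- b * ln (1 - t))). nra.
Qed.

Lemma bernoulli_upper (b t : R) : 0 < b -> 0 < t <= 1 / 2 -> b * t <= 1 / 4 ->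
  Rpower (1 - t) (- b) <= 1 + 4 * b * t.
Proof.
  intros Hb Ht Hbt. unfold Rpower.
  set (v := - b * ln (1 - t)).
  assert (Hlog : - ln (1 - t) <= 2 * t).
  { pose proof (ln_ge_one_sub_inv (1 - t) ltac:(lra)).
    assert (/ (1 - t) - 1 <= 2 * t).
    { replace (/ (1 - t) - 1) with (t / (1 - t)) by (field; lra).
      apply Rmult_le_reg_r with (1 - t); [lra|]. unfold Rdiv.
      rewrite Rmult_assoc, Rinv_l by lra. nra. }
    lra. }
  assert (Hv0 : 0 <= v).
  { assert (ln (1 - t) < 0) by (rewrite <- ln_1; apply ln_increasing; lra). unfold v. nra. }
  assert (Hv : v <= 2 * b * t) by (unfold v; nra).
  (* [exp v <= 1 / (1 - v) <= 1 + 2 v] because [v <= 1/2] *)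
  pose proof (exp_ineq1_le (- v)).
  assert (exp v * exp (- v) = 1) by (rewrite <- exp_plus, Rplus_opp_r; apply exp_0).
  pose proof (exp_pos v). nra.
Qed.

Lemma glb_of_nonneg (E : R -> Prop) :
  (exists x, E x) -> (forall x, E x -> 0 <= x) -> exists m, is_glb E m.
Proof.
  intros [x0 Hx0] Hpos.
  destruct (completeness (fun y => E (- y))) as [m [Hub Hlub]].
  - exists 0. intros y Hy. specialize (Hpos _ Hy). lra.
  - exists (- x0). now rewrite Ropp_involutive.
  - exists (- m). split.
    + intros x Hx. assert (- x <= m) by (apply Hub; now rewrite Ropp_involutive). lra.
    + intros b Hb. assert (m <= - b) by (apply Hlub; intros y Hy; specialize (Hb _ Hy); lra). lra.
Qed.

Lemma cover_sum_nonneg (A : R -> Prop) (m : R) : cover_sums A m -> 0 <= m.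
Proof.
  intros [a [b [Hab [_ Hsum]]]].
  apply Rle_trans with (sum_f_R0 (fun n => b n - a n) 0).
  - simpl. specialize (Hab 0%nat). lra.
  - apply sum_incr; [exact Hsum|]. intros n. specialize (Hab n). lra.
Qed.

Lemma leb_measure_glb (A : R -> Prop) :
  (exists m, cover_sums A m) -> is_glb (cover_sums A) (leb_measure A).
Proof.
  intros Hex. unfold leb_measure. apply epsilon_spec.
  apply glb_of_nonneg; [exact Hex | apply cover_sum_nonneg].
Qed.

Lemma leb_measure_le_cover (A : R -> Prop) (m : R) :
  cover_sums A m -> leb_measure A <= m.
Proof.
  intros Hm. apply (proj1 (leb_measure_glb A (ex_intro _ m Hm))). exact Hm.
Qed.

(** A cover of [A] by finitely many intervals [(a n, b n)], [n <= N], is a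
    cover of finite length (pad it with empty intervals). *)
Lemma finite_cover_sums (A : R -> Prop) (a b : nat -> R) (N : nat) :
  (forall n, (n <= N)%nat -> a n <= b n) ->
  (forall y, A y -> exists n, (n <= N)%nat /\ a n < y < b n) ->
  cover_sums A (sum_f_R0 (fun n => b n - a n) N).
Proof.
  intros Hab Hcov.
  set (a' := fun n => if (n <=? N)%nat then a n else 0).
  set (b' := fun n => if (n <=? N)%nat then b n else 0).
  assert (Hfin : forall n, (N <= n)%nat ->
    sum_f_R0 (fun n => b' n - a' n) n = sum_f_R0 (fun n => b n - a n) N).
  { induction 1 as [|n Hn IH].
    - apply sum_eq. intros i Hi. unfold a', b'.
      now replace (i <=? N)%nat with true by (symmetry; apply Nat.leb_le; lia).
    - simpl. rewrite IH. unfold a', b'.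
      replace (S n <=? N)%nat with false by (symmetry; apply Nat.leb_gt; lia). lra. }
  exists a', b'. split; [|split].
  - intros n. unfold a', b'. destruct (Nat.leb_spec n N); [now apply Hab | lra].
  - intros y Hy. destruct (Hcov y Hy) as [n [Hn Hy']]. exists n. unfold a', b'.
    now replace (n <=? N)%nat with true by (symmetry; apply Nat.leb_le; lia).
  - intros eps Heps. exists N. intros n Hn. unfold R_dist.
    rewrite Hfin by lia. rewrite Rminus_diag, Rabs_R0. exact Heps.
Qed.

Fixpoint total_length (l : list (R * R)) : R :=
  match l with nil => 0 | (a, b) :: t => (b - a) + total_length t end.

Lemma total_length_app (l1 l2 : list (R * R)) :
  total_length (l1 ++ l2) = total_length l1 + total_length l2.
Proof. induction l1 as [|[a b] t IH]; simpl; try rewrite IH; lra. Qed.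

Lemma total_length_nonneg (l : list (R * R)) :
  (forall p, In p l -> fst p <= snd p) -> 0 <= total_length l.
Proof.
  induction l as [|[a b] t IH]; simpl; intros H; [lra|].
  assert (a <= b) by (apply (H (a, b)); auto).
  assert (0 <= total_length t) by (apply IH; auto). lra.
Qed.

(** Induction on the number of intervals: remove the
    interval [(a, b)] containing [d]; what remains covers [[c, a]]. *)
Lemma segment_le_total_length : forall n (l : list (R * R)), (length l <= n)%nat ->
  (forall p, In p l -> fst p <= snd p) -> forall c d, c <= d ->
  (forall x, c <= x <= d -> exists p, In p l /\ fst p < x < snd p) ->
  d - c <= total_length l.
Proof.
  induction n as [|n IH]; intros l Hlen Hle c d Hcd Hcov.
  - destruct l; simpl in Hlen; [|lia]. destruct (Hcov d) as [p [[] _]]. lra.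
  - destruct (Hcov d) as [[a b] [Hin [Ha Hb]]]; [lra|]. simpl in Ha, Hb.
    destruct (in_split _ _ Hin) as [l1 [l2 ->]].
    assert (Hle' : forall p, In p (l1 ++ l2) -> fst p <= snd p).
    { intros p Hp. apply Hle. apply in_or_app.
      destruct (in_app_or _ _ _ Hp); auto. right; right; auto. }
    assert (Hrest := total_length_nonneg _ Hle').
    rewrite total_length_app in Hrest |- *. simpl.
    destruct (Rlt_or_le a c) as [Hac | Hca]; [lra|].
    assert (a - c <= total_length (l1 ++ l2)).
    { apply IH; auto.
      - rewrite length_app in *. simpl in Hlen. lia.
      - intros x Hx. destruct (Hcov x) as [q [Hq Hxq]]; [lra|].
        exists q. split; auto. apply in_or_app.
        destruct (in_app_or _ _ _ Hq) as [H | [H | H]]; auto.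
        subst q. simpl in Hxq. lra. }
    rewrite total_length_app in *. lra.
Qed.

Lemma segment_finite_subcover (a b : nat -> R) (c d : R) : c <= d ->
  (forall x, c <= x <= d -> exists n, a n < x < b n) ->
  exists N, forall x, c <= x <= d -> exists n, (n <= N)%nat /\ a n < x < b n.
Proof.
  intros Hcd Hcov.
  set (fam := mkfamily (fun y => exists n, y = INR n)
     (fun y x => exists n, y = INR n /\ a n < x < b n)
     (fun y (H : exists x, exists n, y = INR n /\ a n < x < b n) =>
        match H with ex_intro _ _ (ex_intro _ n (conj e _)) => ex_intro _ n e end)).
  destruct (compact_P3 c d fam) as [D [Hsub [l Hl]]].
  - split.
    + intros x Hx. destruct (Hcov x Hx) as [n Hn]. exists (INR n), n. auto.
    + intros y x [n [Hy [H1 H2]]].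
      assert (Hd : 0 < Rmin (x - a n) (b n - x)) by (apply Rmin_pos; lra).
      exists (mkposreal _ Hd). intros z Hz. unfold disc in Hz. simpl in Hz.
      apply Rabs_def2 in Hz.
      pose proof (Rmin_l (x - a n) (b n - x)). pose proof (Rmin_r (x - a n) (b n - x)).
      exists n. split; [auto | lra].
  - destruct (INR_unbounded (MaxRlist l)) as [N HN].
    exists N. intros x Hx. destruct (Hsub x Hx) as [y [[n [-> Hn]] HD]].
    exists n. split; auto.
    assert (Hin : In (INR n) l) by (apply Hl; split; auto; exists n; auto).
    apply MaxRlist_P1 in Hin.
    assert (Hlt : INR n < INR N) by lra. apply INR_lt in Hlt. lia.
Qed.

Lemma leb_measure_ge_segment (A : R -> Prop) (c d : R) :
  (exists m, cover_sums A m) -> c <= d ->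
  (forall x, c <= x <= d -> A x) -> d - c <= leb_measure A.
Proof.
  intros Hex Hcd Hsub. apply (proj2 (leb_measure_glb A Hex)).
  intros m [a [b [Hab [Hcov Hsum]]]].
  destruct (segment_finite_subcover a b c d Hcd) as [N HN]; [auto|].
  set (l := map (fun i => (a i, b i)) (seq 0 (S N))).
  assert (Hl : total_length l = sum_f_R0 (fun n => b n - a n) N).
  { unfold l. clear HN. induction N as [|N IH]; [simpl; lra|].
    rewrite seq_S, map_app, total_length_app, IH. simpl. lra. }
  apply Rle_trans with (sum_f_R0 (fun n => b n - a n) N).
  - rewrite <- Hl. apply (segment_le_total_length (length l)); auto.
    + intros p Hp. apply in_map_iff in Hp. destruct Hp as [i [<- _]]. apply Hab.
    + intros x Hx. destruct (HN x Hx) as [n [Hn Hxn]]. exists (a n, b n).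
      split; auto. apply in_map_iff. exists n. split; auto. apply in_seq. lia.
  - apply sum_incr; [exact Hsum|]. intros n. specialize (Hab n). lra.
Qed.

Section DecreasingSequence.

Variable u : nat -> R.
Hypothesis u_antitone : forall k m, (k <= m)%nat -> u m <= u k.
Hypothesis u_nonneg : forall k, 0 <= u k.

Let range : R -> Prop := fun y => exists k, y = u k.

(** Cover the [e]-neighbourhood by [(-e, u N + e)] (the tail from [N] on)
    and by one interval of length [2 e] around each of the [N] first terms. *)
Lemma nbhd_range_cover (e : R) (N : nat) : 0 < e ->
  cover_sums (nbhd range e) (u N + 2 * e * (INR N + 1)).
Proof.
  intros He.
  set (a := fun n => match n with O => - e | S j => u j - e end).
  set (b := fun n => match n with O => u N + e | S j => u j + e end).
  assert (Hsum : forall n, sum_f_R0 (fun n => b n - a n) n = u N + 2 * e + 2 * e * INR n).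
  { induction n as [|n IH]; simpl sum_f_R0; [simpl; lra|].
    rewrite IH, S_INR. simpl. ring. }
  replace (u N + 2 * e * (INR N + 1)) with (sum_f_R0 (fun n => b n - a n) N)
    by (rewrite Hsum; ring).
  apply finite_cover_sums.
  - intros [|j] _; simpl; [pose proof (u_nonneg N) | ]; lra.
  - intros y [z [[k ->] Hy]]. apply Rabs_def2 in Hy.
    destruct (Nat.lt_ge_cases k N) as [Hk | Hk].
    + exists (S k). simpl. split; [lia | lra].
    + exists O. simpl. pose proof (u_antitone N k Hk). pose proof (u_nonneg k).
      split; [lia | lra].
Qed.

(** If the sequence tends to [0] and its steps are shorter than [2 e] from
    index [N] on, then the whole segment [[0, u N]] lies in the
    [e]-neighbourhood: a point [y] is within [e] of the last term that is
    still [>= y + e], or of the one following it. *)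
Lemma segment_in_nbhd_range (e : R) (N : nat) : 0 < e ->
  (forall k, (N <= k)%nat -> u k - u (S k) < 2 * e) ->
  (forall d, 0 < d -> exists k, u k < d) ->
  forall y, 0 <= y <= u N -> nbhd range e y.
Proof.
  intros He Hgap Hsmall y Hy.
  assert (Hwalk : forall j, nbhd range e y \/ y + e <= u (N + j)).
  { induction j as [|j [Hin | Hle]]; auto.
    - rewrite Nat.add_0_r. destruct (Rlt_le_dec (u N) (y + e)); auto.
      left. exists (u N). split; [now exists N | apply Rabs_def1; lra].
    - rewrite Nat.add_succ_r. destruct (Rlt_le_dec (u (S (N + j))) (y + e)); auto.
      left. exists (u (S (N + j))). split; [now exists (S (N + j))|].
      pose proof (Hgap (N + j)%nat ltac:(lia)). apply Rabs_def1; lra. }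
  destruct (Hsmall (y + e)) as [j Hj]; [lra|].
  destruct (Hwalk j) as [Hin | Hle]; auto.
  pose proof (u_antitone j (N + j) ltac:(lia)). lra.
Qed.

End DecreasingSequence.
Section PowerLawNeighbourhoods.

Variables (S : R -> Prop) (d c C e0 : R).
Hypothesis d_nonneg : 0 <= d.
Hypothesis c_pos : 0 < c.
Hypothesis e0_pos : 0 < e0.
Hypothesis measure_power_law : forall e, 0 < e < e0 ->
  c * Rpower e (1 - d) <= leb_measure (nbhd S e) <= C * Rpower e (1 - d).

Lemma mink_ratio_power_law (s e : R) : 0 < e < e0 ->
  c * Rpower e (s - d) <= mink_ratio S s e <= C * Rpower e (s - d).
Proof.
  intros He. destruct (measure_power_law e He) as [Hlo Hhi]. unfold mink_ratio.
  assert (Hp : 0 < / Rpower e (1 - s)) by apply Rinv_0_lt_compat, Rpower_pos.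
  assert (Heq : Rpower e (s - d) = Rpower e (1 - d) * / Rpower e (1 - s)).
  { rewrite <- Rpower_Ropp, <- Rpower_plus. f_equal. ring. }
  rewrite Heq, <- !Rmult_assoc. unfold Rdiv. split; apply Rmult_le_compat_r; lra.
Qed.

Lemma upper_content_zero_above (s : R) : d < s -> upper_content_zero S s.
Proof.
  intros Hs eta Heta.
  assert (HC : 0 < C).
  { destruct (measure_power_law (e0 / 2)) as [H1 H2]; [lra|].
    pose proof (Rpower_pos (e0 / 2) (1 - d)). nra. }
  set (w := Rpower (eta / (2 * C)) (1 / (s - d))).
  exists (Rmin e0 w). split; [apply Rmin_pos; [lra | apply Rpower_pos]|].
  intros e He. pose proof (Rmin_l e0 w). pose proof (Rmin_r e0 w).
  destruct (mink_ratio_power_law s e ltac:(lra)) as [_ Hhi].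
  assert (Hsmall : Rpower e (s - d) < eta / (2 * C)).
  { apply Rpower_small; [lra | apply Rdiv_lt_0_compat; lra | unfold w in *; lra]. }
  assert (C * Rpower e (s - d) < C * (eta / (2 * C))) by (apply Rmult_lt_compat_l; lra).
  replace (C * (eta / (2 * C))) with (eta / 2) in * by (field; lra). lra.
Qed.

(** The liminf is at most the limsup. *)
Lemma lower_content_zero_of_upper (s : R) : upper_content_zero S s -> lower_content_zero S s.
Proof.
  intros H eta delta Heta Hdelta. destruct (H eta Heta) as [d1 [Hd1 H1]].
  assert (0 < Rmin delta d1) by (apply Rmin_pos; lra).
  pose proof (Rmin_l delta d1). pose proof (Rmin_r delta d1).
  exists (Rmin delta d1 / 2). split; [lra | apply H1; lra].
Qed.

(** Below [d] the ratio stays at least [c] for [e <= 1]. *)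
Lemma lower_content_nonzero_below (s : R) : s < d -> ~ lower_content_zero S s.
Proof.
  intros Hs H. destruct (H c (Rmin e0 1) c_pos) as [e [He Hratio]]; [apply Rmin_pos; lra|].
  pose proof (Rmin_l e0 1). pose proof (Rmin_r e0 1).
  destruct (mink_ratio_power_law s e ltac:(lra)) as [Hlo _].
  pose proof (Rpower_ge_one e (s - d) ltac:(lra) ltac:(lra)). nra.
Qed.

Lemma glb_of_threshold (P : R -> Prop) :
  (forall s, d < s -> P s) -> (forall s, s < d -> ~ P s) ->
  is_glb (fun s => 0 <= s /\ P s) d.
Proof.
  intros Habove Hbelow. split.
  - intros s [_ Hs]. apply Rnot_lt_le. intros Hlt. exact (Hbelow s Hlt Hs).
  - intros b Hb. apply Rnot_lt_le. intros Hlt.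
    assert (b <= (b + d) / 2) by (apply Hb; split; [lra | apply Habove; lra]). lra.
Qed.

Lemma power_law_box_dim : box_dim_eq S d.
Proof.
  split; apply glb_of_threshold.
  - apply upper_content_zero_above.
  - intros s Hs Hup. exact (lower_content_nonzero_below s Hs (lower_content_zero_of_upper s Hup)).
  - intros s Hs. now apply lower_content_zero_of_upper, upper_content_zero_above.
  - apply lower_content_nonzero_below.
Qed.

Lemma power_law_nondegenerate : minkowski_nondegenerate S.
Proof.
  exists d. split; [exact d_nonneg | split].
  - exists c, e0. split; [exact c_pos | split; [exact e0_pos|]].
    intros e He. destruct (mink_ratio_power_law d e He) as [H _].
    rewrite Rminus_diag, Rpower_O in H; lra.
  - exists C, e0. split; [exact e0_pos|].
    intros e He. destruct (mink_ratio_power_law d e He) as [_ H].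
    rewrite Rminus_diag, Rpower_O in H; lra.
Qed.

End PowerLawNeighbourhoods.
Lemma linear_growth (y : nat -> R) (K : nat) (a b : R) : 0 < a ->
  (forall k, 0 < y k) -> (forall k m, (k <= m)%nat -> y k <= y m) ->
  (forall k, (K <= k)%nat -> y k + a <= y (S k) <= y k + b) ->
  exists c D, 0 < c /\ 0 < D /\ forall k, c * (INR k + 1) <= y k <= D * (INR k + 1).
Proof.
  intros Ha Hpos Hmono Hinc.
  assert (Hb : a <= b) by (destruct (Hinc K (le_n K)); lra).
  assert (Htail : forall j, y K + a * INR j <= y (K + j)%nat <= y K + b * INR j).
  { induction j as [|j IH]; [rewrite Nat.add_0_r; simpl; lra|].
    rewrite Nat.add_succ_r, S_INR. pose proof (Hinc (K + j)%nat ltac:(lia)). lra. }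
  pose proof (pos_INR K) as HK.
  set (c := Rmin (y O / (INR K + 1)) a).
  assert (Hc1 : c * (INR K + 1) <= y O).
  { apply Rle_trans with (y O / (INR K + 1) * (INR K + 1)); [|right; field; lra].
    apply Rmult_le_compat_r; [lra | apply Rmin_l]. }
  assert (Hc2 : c <= a) by apply Rmin_r.
  assert (Hc : 0 < c) by (apply Rmin_pos; [apply Rdiv_lt_0_compat; [apply Hpos | lra] | lra]).
  exists c, (y K + b). split; [exact Hc | split; [pose proof (Hpos K); lra|]].
  intros k. pose proof (pos_INR k).
  destruct (Nat.le_gt_cases K k) as [Hk | Hk].
  - destruct (Htail (k - K)%nat) as [Hlo Hhi].
    replace (K + (k - K))%nat with k in * by lia. rewrite minus_INR in * by lia.
    assert (HkK : 0 <= INR k - INR K) by (rewrite <- minus_INR by lia; apply pos_INR).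
    pose proof (Hmono O K ltac:(lia)). pose proof (Hpos K).
    assert (c * (INR k - INR K) <= a * (INR k - INR K)) by (apply Rmult_le_compat_r; lra).
    split; nra.
  - assert (INR k + 1 <= INR K + 1) by (apply Rplus_le_compat_r, le_INR; lia).
    pose proof (Hmono O k ltac:(lia)). pose proof (Hmono k K ltac:(lia)).
    pose proof (Hpos K). split; nra.
Qed.

Lemma first_crossing (g : nat -> R) (c : R) : c <= g O -> (exists n, g n < c) ->
  exists M, c <= g M /\ g (S M) < c.
Proof.
  intros H0 [n Hn]. induction n as [|n IH]; [lra|].
  destruct (Rlt_le_dec (g n) c) as [Hlt | Hle]; [now apply IH | now exists n].
Qed.

Section Orbit.

Variables (alpha r : R) (f : R -> R) (x1 A B delta : R).
Hypothesis alpha_gt1 : 1 < alpha.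
Hypothesis f_pos : forall z, 0 < z < r -> 0 < f z.
Hypothesis f_mono : forall z w, 0 < z < r -> 0 < w < r -> z <= w -> f z <= f w.
Hypothesis f_lt : forall z, 0 < z < r -> f z < z.
Hypothesis x1_in : 0 < x1 < r.
Hypothesis A_pos : 0 < A.
Hypothesis A_le_B : A <= B.
Hypothesis delta_pos : 0 < delta.
Hypothesis f_power_law : forall z, 0 < z < r -> z < delta ->
  A * Rpower z alpha <= f z <= B * Rpower z alpha.

Notation x := (orbit f x1).

Lemma orbit_bounds (k : nat) : 0 < x k <= x1.
Proof.
  induction k as [|k IH]; simpl; [lra|].
  pose proof (f_pos (x k) ltac:(lra)). pose proof (f_lt (x k) ltac:(lra)). lra.
Qed.

Lemma orbit_in_domain (k : nat) : 0 < x k < r.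
Proof. pose proof (orbit_bounds k). lra. Qed.

Lemma orbit_antitone (k m : nat) : (k <= m)%nat -> x m <= x k.
Proof.
  induction 1 as [|m _ IH]; [lra|]. simpl. pose proof (f_pos _ (orbit_in_domain m)). lra.
Qed.

Lemma step_antitone (k m : nat) : (k <= m)%nat -> f (x m) <= f (x k).
Proof. intros H. apply f_mono; try apply orbit_in_domain. now apply orbit_antitone. Qed.

(** The steps become arbitrarily small: steps bounded below by [c > 0]
    would drive the orbit below [0]. *)
Lemma steps_small (c : R) : 0 < c -> exists k, f (x k) < c.
Proof.
  intros Hc. apply NNPP. intros Hno.
  assert (Hbig : forall k, c <= f (x k)).
  { intros k. apply Rnot_lt_le. intros Hk. apply Hno. now exists k. }
  assert (Hlin : forall k, x k <= x1 - INR k * c).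
  { induction k as [|k IH]; [simpl; lra|]. simpl orbit. rewrite S_INR.
    specialize (Hbig k). lra. }
  destruct (INR_unbounded (x1 / c)) as [n Hn].
  assert (x1 < INR n * c).
  { apply Rmult_lt_reg_r with (/ c); [now apply Rinv_0_lt_compat|].
    rewrite Rmult_assoc, Rinv_r, Rmult_1_r by lra. exact Hn. }
  specialize (Hlin n). pose proof (orbit_bounds n). lra.
Qed.

(** Hence the orbit tends to [0]: once a step is below [f d], the orbit is
    below [d] by monotonicity of [f]. *)
Lemma orbit_small (d : R) : 0 < d -> exists k, x k < d.
Proof.
  intros Hd. destruct (Rlt_le_dec x1 d) as [Hx1 | Hx1]; [now exists O|].
  destruct (steps_small (f d) (f_pos d ltac:(lra))) as [k Hk]. exists k.
  apply Rnot_le_lt. intros Hle. pose proof (f_mono d (x k) ltac:(lra) (orbit_in_domain k) Hle).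
  lra.
Qed.

(** Scales [z] at which the power law holds and [t = f z / z] is small
    enough for the Bernoulli bounds. *)
Definition small_scale (z : R) : Prop :=
  z < r /\ z < delta /\ B * Rpower z (alpha - 1) <= 1 / 2 /\
  (alpha - 1) * (B * Rpower z (alpha - 1)) <= 1 / 4.

Lemma small_scale_near0 : exists d0, 0 < d0 /\ forall z, 0 < z < d0 -> small_scale z.
Proof.
  set (eta := Rmin (1 / 2) (1 / (4 * (alpha - 1))) / B).
  assert (Heta : 0 < eta).
  { apply Rdiv_lt_0_compat; [apply Rmin_pos; apply Rdiv_lt_0_compat|]; lra. }
  exists (Rmin (Rmin r delta) (Rpower eta (1 / (alpha - 1)))).
  split; [apply Rmin_pos; [apply Rmin_pos; lra | apply Rpower_pos]|].
  intros z Hz.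
  pose proof (Rmin_l (Rmin r delta) (Rpower eta (1 / (alpha - 1)))).
  pose proof (Rmin_r (Rmin r delta) (Rpower eta (1 / (alpha - 1)))).
  pose proof (Rmin_l r delta). pose proof (Rmin_r r delta).
  assert (Hsmall : Rpower z (alpha - 1) < eta) by (apply Rpower_small; lra).
  assert (Hq : B * Rpower z (alpha - 1) <= Rmin (1 / 2) (1 / (4 * (alpha - 1)))).
  { unfold eta in Hsmall. apply Rlt_le.
    apply Rmult_lt_reg_r with (/ B); [apply Rinv_0_lt_compat; lra|].
    rewrite Rmult_comm, <- Rmult_assoc, Rinv_l, Rmult_1_l by lra. exact Hsmall. }
  pose proof (Rmin_l (1 / 2) (1 / (4 * (alpha - 1)))).
  pose proof (Rmin_r (1 / 2) (1 / (4 * (alpha - 1)))).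
  assert ((alpha - 1) * (1 / (4 * (alpha - 1))) = 1 / 4) by (field; lra).
  split; [lra | split; [lra | split; [lra | nra]]].
Qed.

Lemma Rpower_alpha_split (z : R) : 0 < z -> Rpower z alpha = z * Rpower z (alpha - 1).
Proof.
  intros Hz. replace alpha with (1 + (alpha - 1)) at 1 by ring.
  now rewrite Rpower_plus, Rpower_1.
Qed.

Lemma half_step (z : R) : 0 < z -> small_scale z -> z / 2 <= z - f z.
Proof.
  intros Hz [Hr [Hd [Hq _]]]. destruct (f_power_law z ltac:(lra) Hd) as [_ Hhi].
  rewrite Rpower_alpha_split in Hhi by lra. nra.
Qed.

(** Writing [t = f z / z], we
    have [(z - f z) ^ (1 - alpha) = z ^ (1 - alpha) (1 - t) ^ (1 - alpha)]
    with [A z ^ (alpha - 1) <= t <= B z ^ (alpha - 1)]. *)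
Lemma inverse_power_step (z : R) : 0 < z -> small_scale z ->
  Rpower z (- (alpha - 1)) + (alpha - 1) * A <= Rpower (z - f z) (- (alpha - 1)) <=
  Rpower z (- (alpha - 1)) + 4 * (alpha - 1) * B.
Proof.
  intros Hz [Hr [Hd [Hq Hbq]]].
  destruct (f_power_law z ltac:(lra) Hd) as [Hlo Hhi].
  pose proof (f_pos z ltac:(lra)). pose proof (f_lt z ltac:(lra)).
  set (b := alpha - 1) in *. set (p := Rpower z b) in *.
  assert (Hp : 0 < p) by apply Rpower_pos.
  rewrite Rpower_alpha_split in Hlo, Hhi by lra. fold b p in Hlo, Hhi.
  set (t := f z / z).
  assert (Hfz : f z = z * t) by (unfold t; field; lra).
  rewrite Hfz in *.
  assert (Ht_lo : A * p <= t) by nra.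
  assert (Ht_hi : t <= B * p) by nra.
  assert (Ht : 0 < t < 1) by nra.
  set (y := Rpower z (- b)).
  assert (Hyp : y * p = 1) by (apply Rpower_inv_pair; lra).
  assert (Hy : 0 < y) by apply Rpower_pos.
  replace (z - z * t) with (z * (1 - t)) by ring.
  rewrite <- Rpower_mult_distr by lra. fold y.
  assert (Hb : 0 < b) by (unfold b; lra).
  pose proof (bernoulli_lower b t Hb Ht).
  assert (b * t <= 1 / 4) by nra.
  pose proof (bernoulli_upper b t Hb ltac:(lra) ltac:(lra)).
  split; nra.
Qed.

Lemma orbit_inverse_power_linear : exists c D, 0 < c /\ 0 < D /\ forall k,
  c * (INR k + 1) <= Rpower (x k) (- (alpha - 1)) <= D * (INR k + 1).
Proof.
  destruct small_scale_near0 as [d0 [Hd0 Hsmall]].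
  destruct (orbit_small d0 Hd0) as [K HK].
  apply (linear_growth _ K ((alpha - 1) * A) (4 * (alpha - 1) * B)).
  - apply Rmult_lt_0_compat; lra.
  - intros k. apply Rpower_pos.
  - intros k m Hkm. apply Rpower_antitone; [lra|].
    split; [apply orbit_bounds | now apply orbit_antitone].
  - intros k Hk. pose proof (orbit_bounds k). pose proof (orbit_antitone K k Hk).
    apply inverse_power_step; [lra | apply Hsmall; lra].
Qed.

Lemma orbit_rate : exists a b, 0 < a /\ a <= b /\ forall n : nat, (1 <= n)%nat ->
  a <= x (n - 1) / Rpower (INR n) (- (1 / (alpha - 1))) <= b.
Proof.
  destruct orbit_inverse_power_linear as [c [D [Hc [HD Hlin]]]].
  set (g := 1 / (alpha - 1)).
  assert (Hg : 0 < g) by (apply Rdiv_lt_0_compat; lra).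
  assert (Hx : forall k, x k = Rpower (Rpower (x k) (- (alpha - 1))) (- g)).
  { intros k. rewrite Rpower_mult. replace (- (alpha - 1) * - g) with 1 by (unfold g; field; lra).
    symmetry. apply Rpower_1, orbit_bounds. }
  assert (Hrate : forall n, (1 <= n)%nat ->
     Rpower D (- g) <= x (n - 1) / Rpower (INR n) (- g) <= Rpower c (- g)).
  { intros [|k] Hn; [lia|]. replace (S k - 1)%nat with k by lia. rewrite S_INR.
    pose proof (pos_INR k). destruct (Hlin k) as [Hlo Hhi].
    assert (Hp : 0 < Rpower (INR k + 1) (- g)) by apply Rpower_pos.
    rewrite Hx. split.
    - apply Rmult_le_reg_r with (Rpower (INR k + 1) (- g)); [exact Hp|].
      unfold Rdiv. rewrite Rmult_assoc, Rinv_l, Rmult_1_r by lra.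
      rewrite Rpower_mult_distr by lra. apply Rpower_antitone; [lra|].
      split; [apply Rpower_pos | exact Hhi].
    - apply Rmult_le_reg_r with (Rpower (INR k + 1) (- g)); [exact Hp|].
      unfold Rdiv. rewrite Rmult_assoc, Rinv_l, Rmult_1_r by lra.
      rewrite Rpower_mult_distr by lra. apply Rpower_antitone; [lra|].
      split; [nra | exact Hlo]. }
  exists (Rpower D (- g)), (Rpower c (- g)). split; [apply Rpower_pos|].
  split; [destruct (Hrate 1%nat (le_n 1)); lra | exact Hrate].
Qed.

(** Once the steps from index [N] on are shorter than [2 e], the
    [e]-neighbourhood of the orbit contains [[0, x N]] and is covered by
    [N + 1] intervals of total length [x N + 2 e (N + 1)]. *)
Lemma orbit_nbhd_measure (e : R) (N : nat) : 0 < e -> f (x N) < 2 * e ->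
  x N <= leb_measure (nbhd (orbit_set f x1) e) <= x N + 2 * e * (INR N + 1).
Proof.
  intros He HN.
  assert (Hanti : forall k m, (k <= m)%nat -> x m <= x k) by exact orbit_antitone.
  assert (Hnonneg : forall k, 0 <= x k) by (intros k; pose proof (orbit_bounds k); lra).
  pose proof (nbhd_range_cover x Hanti Hnonneg e N He) as Hcover.
  split; [|now apply leb_measure_le_cover].
  rewrite <- (Rminus_0_r (x N)). apply leb_measure_ge_segment; [eauto | apply Hnonneg|].
  apply (segment_in_nbhd_range x Hanti e N He).
  - intros k Hk. simpl orbit. pose proof (step_antitone N k Hk). lra.
  - exact orbit_small.
Qed.

Lemma critical_index : exists e0, 0 < e0 <= 1 /\ forall e, 0 < e < e0 ->
  exists M, small_scale (x M) /\ small_scale (x (S M)) /\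
            2 * e <= f (x M) /\ f (x (S M)) < 2 * e.
Proof.
  destruct small_scale_near0 as [d0 [Hd0 Hsmall]].
  destruct (orbit_small d0 Hd0) as [K HK].
  pose proof (f_pos _ (orbit_in_domain K)) as HfK.
  exists (Rmin 1 (f (x K) / 2)).
  split; [split; [apply Rmin_pos; lra | apply Rmin_l]|].
  intros e He. pose proof (Rmin_r 1 (f (x K) / 2)).
  destruct (first_crossing (fun j => f (x (K + j)%nat)) (2 * e)) as [j [Hj1 Hj2]].
  - rewrite Nat.add_0_r. lra.
  - destruct (steps_small (2 * e)) as [k Hk]; [lra|].
    exists k. pose proof (step_antitone k (K + k) ltac:(lia)). simpl. lra.
  - exists (K + j)%nat. rewrite <- Nat.add_succ_r.
    pose proof (orbit_bounds (K + j)). pose proof (orbit_antitone K (K + j) ltac:(lia)).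
    pose proof (orbit_bounds (K + S j)). pose proof (orbit_antitone K (K + S j) ltac:(lia)).
    split; [apply Hsmall; lra | split; [apply Hsmall; lra | auto]].
Qed.

(** At the critical index [M] (with [N = M + 1]) the power law gives
    [x M >= (2 e / B) ^ (1 / alpha)], [x N <= (2 e / A) ^ (1 / alpha)] and
    [x N >= x M / 2], while the linear growth of [x M ^ (1 - alpha)] bounds
    [N] by a multiple of [e ^ ((1 - alpha) / alpha)]. *)
Lemma orbit_nbhd_power_law : exists c C e0, 0 < c /\ 0 < e0 /\ forall e, 0 < e < e0 ->
  c * Rpower e (1 / alpha) <= leb_measure (nbhd (orbit_set f x1) e) <=
  C * Rpower e (1 / alpha).
Proof.
  destruct orbit_inverse_power_linear as [c' [D [Hc' [_ Hlin]]]].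
  destruct critical_index as [e0 [He0 Hcrit]].
  set (s := 1 / alpha).
  assert (Hs : 0 < s < 1).
  { unfold s. split; [apply Rdiv_lt_0_compat; lra|].
    apply Rmult_lt_reg_r with alpha; [lra|]. field_simplify; lra. }
  set (kB := Rpower (2 / B) s). set (kA := Rpower (2 / A) s).
  set (kN := Rpower (2 / B) (- ((alpha - 1) * s)) / c').
  exists (kB / 2), (kA + 2 + 2 * kN), e0.
  split; [unfold kB; pose proof (Rpower_pos (2 / B) s); lra | split; [lra|]].
  intros e He. destruct (Hcrit e He) as [M [HsM [HsN [HfM HfN]]]].
  set (N := S M) in *.
  pose proof (orbit_bounds M). pose proof (orbit_bounds N).
  assert (Hes : 0 < Rpower e s) by apply Rpower_pos.
  assert (HxM : kB * Rpower e s <= x M).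
  { destruct HsM as [Hr [Hd _]]. destruct (f_power_law (x M) ltac:(lra) Hd) as [_ Hhi].
    unfold kB. rewrite Rpower_mult_distr by (try apply Rdiv_lt_0_compat; lra).
    apply Rpower_root_ge; [lra | lra | apply Rmult_lt_0_compat; [apply Rdiv_lt_0_compat|]; lra|].
    apply Rmult_le_reg_l with B; [lra|].
    replace (B * (2 / B * e)) with (2 * e) by (field; lra). lra. }
  assert (HxN_hi : x N <= kA * Rpower e s).
  { destruct HsN as [Hr [Hd _]]. destruct (f_power_law (x N) ltac:(lra) Hd) as [Hlo _].
    unfold kA. rewrite Rpower_mult_distr by (try apply Rdiv_lt_0_compat; lra).
    apply Rpower_root_le; [lra | lra | apply Rmult_lt_0_compat; [apply Rdiv_lt_0_compat|]; lra|].
    apply Rmult_le_reg_l with A; [lra|].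
    replace (A * (2 / A * e)) with (2 * e) by (field; lra). lra. }
  assert (HxN_lo : x M / 2 <= x N) by (exact (half_step (x M) ltac:(lra) HsM)).
  assert (He_le : e <= Rpower e s).
  { pose proof (Rpower_ge_one e (s - 1) ltac:(lra) ltac:(lra)).
    replace (Rpower e s) with (e * Rpower e (s - 1))
      by (rewrite <- (Rpower_1 e) at 1 by lra; rewrite <- Rpower_plus; f_equal; ring).
    nra. }
  assert (HN : e * INR N <= kN * Rpower e s).
  { destruct (Hlin M) as [Hlo _]. fold N in Hlo. rewrite <- S_INR in Hlo. fold N in Hlo.
    assert (Hy : Rpower (x M) (- (alpha - 1)) <=
                 Rpower (kB * Rpower e s) (- (alpha - 1))).
    { apply Rpower_antitone; [lra | split; [apply Rmult_lt_0_compat; [apply Rpower_pos | lra] | exact HxM]]. }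
    assert (Hsplit : Rpower (kB * Rpower e s) (- (alpha - 1)) * e =
                     Rpower (2 / B) (- ((alpha - 1) * s)) * Rpower e s).
    { unfold kB. rewrite <- Rpower_mult_distr by (try apply Rpower_pos; lra).
      rewrite !Rpower_mult, Rmult_assoc.
      replace (s * - (alpha - 1)) with (- ((alpha - 1) * s)) by ring.
      replace (Rpower e (- ((alpha - 1) * s)) * e) with (Rpower e s); [reflexivity|].
      rewrite <- (Rpower_1 e) at 3 by lra. rewrite <- Rpower_plus. f_equal.
      unfold s. field. lra. }
    unfold kN. apply Rmult_le_reg_l with c'; [exact Hc'|].
    replace (c' * (Rpower (2 / B) (- ((alpha - 1) * s)) / c' * Rpower e s))
      with (Rpower (2 / B) (- ((alpha - 1) * s)) * Rpower e s) by (field; lra).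
    rewrite <- Hsplit. nra. }
  destruct (orbit_nbhd_measure e N ltac:(lra) HfN) as [Hlo Hhi].
  split; nra.
Qed.
End Orbit.

Theorem theorem1 (alpha r : R) (f : R -> R) (x1 : R)
  (halpha : 1 < alpha) (hr : 0 < r)
  (hpos : forall x, 0 < x < r -> 0 < f x)
  (hmono : forall x y, 0 < x < r -> 0 < y < r -> x <= y -> f x <= f y)
  (hasym : exists A B delta, 0 < A /\ A <= B /\ 0 < delta /\
      forall x, 0 < x < r -> x < delta ->
        A <= f x / Rpower x alpha <= B)
  (hlt : forall x, 0 < x < r -> f x < x)
  (hx1 : 0 < x1 < r) :
  (exists A B, 0 < A /\ A <= B /\
     forall n : nat, (1 <= n)%nat ->
       A <= orbit f x1 (n - 1) / Rpower (INR n) (- (1 / (alpha - 1))) <= B)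
  /\ box_dim_eq (orbit_set f x1) (1 - 1 / alpha)
  /\ minkowski_nondegenerate (orbit_set f x1).
Proof.
  destruct hasym as [A [B [delta [hA [hAB [hdelta hratio]]]]]].
  assert (hlaw : forall z, 0 < z < r -> z < delta ->
            A * Rpower z alpha <= f z <= B * Rpower z alpha).
  { intros z Hz Hzd. apply bounds_of_ratio; [apply Rpower_pos | now apply hratio]. }
  split; [exact (orbit_rate alpha r f x1 A B delta halpha hpos hmono hlt hx1 hA hAB hdelta hlaw)|].
  destruct (orbit_nbhd_power_law alpha r f x1 A B delta halpha hpos hmono hlt hx1 hA hAB
              hdelta hlaw) as [c [C [e0 [hc [he0 hmeas]]]]].
  assert (hdim : 0 <= 1 - 1 / alpha).
  { assert (1 / alpha < 1) by (apply Rmult_lt_reg_r with alpha; [lra | field_simplify; lra]).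
    lra. }
  replace (1 / alpha) with (1 - (1 - 1 / alpha)) in hmeas by ring.
  split.
  - exact (power_law_box_dim _ _ c C e0 hdim hc he0 hmeas).
  - exact (power_law_nondegenerate _ _ c C e0 hdim hc he0 hmeas).
Qed.
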